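(* Let $\kappa>0$ and let $Z=(Z_t)_{t\ge0}$ be a $\kappa$-self-similar Markov process with transition function $P$. Let $0<s\le t\le u$, $a,b\in[0,1]$ and let $B$ be a measurable set. Then \[ \int P(0,s,0,\mathrm{d}x)\, P\bigl(at,t,(at/s)^{\kappa}x,B\bigr) = P(0,t,0,B) \] and \[ \int P\bigl(at,t,(at/s)^{\kappa}x,\mathrm{d}y\bigr)\, P\bigl(bu,u,(bu/t)^{\kappa}y,B\bigr) = P\bigl(abu,u,(abu/s)^{\kappa}x,B\bigr) \] (the second identity holding for every $x$).
   Context: A real-valued càdlàg Markov process $Z=(Z_t)_{t\ge0}$ (Markov with respect to its natural filtration) is $\kappa$-self-similar if $(Z_{ct})_{t\ge0}$ and $(c^\kappa Z_t)_{t\ge0}$ have the same finite-dimensional distributions for every $c>0$; in particular $Z_0=0$. Its transition function is $P(s,t,x,\mathrm{d}y)=\mathbb{P}(Z_t\in\mathrm{d}y\mid Z_s=x)$, $s\le t$. Self-similarity gives the scaling property $P(cs,ct,c^\kappa x,c^\kappa\,\mathrm{d}y)=P(s,t,x,\mathrm{d}y)$ for all $c>0$, $s\le t$, $x$, where for a measure $M$ and $c>0$ the measure $M(c\,\mathrm{d}y)$ is defined by $\int g(y)M(c\,\mathrm{d}y)=\int g(y/c)M(\mathrm{d}y)$. *)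

From HB Require Import structures.
From mathcomp Require Import all_boot all_order all_algebra.
From mathcomp Require Import all_classical all_reals all_analysis.

Set Implicit Arguments.
Unset Strict Implicit.
Unset Printing Implicit Defensive.

Import Order.TTheory GRing.Theory Num.Theory.
Import numFieldNormedType.Exports.

Local Open Scope classical_set_scope.
Local Open Scope ring_scope.

(* Time is indexed by R; only times t >= 0 are ever used. *)

Definition cadlag (R : realType) (T : Type) (Z : R -> T -> R) : Prop :=
  forall (w : T) (t : R), 0 <= t ->
    (Z^~ w @ at_right t --> Z t w) /\ (0 < t -> cvg (Z^~ w @ at_left t)).

Definition natural_filtration (R : realType) (T : Type) (Z : R -> T -> R)
    (s : R) : set (set T) :=
  <<s [set E | exists r (A : set R), [/\ 0 <= r <= s, measurable A &
                                        E = Z r @^-1` A] ] >>.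

Definition transition_function (R : realType) (P : R -> R -> R.-pker R ~> R)
  : Prop :=
  (forall t x (B : set R), 0 <= t -> measurable B -> P t t x B = \d_x B)
  /\ (forall s t u x (B : set R), 0 <= s -> s <= t -> t <= u -> measurable B ->
        (\int[P s t x]_y P t u y B = P s u x B)%E).

(** Z is Markov w.r.t. its natural filtration with transition function P:
    Pr(E /\ Z_t in B) = E[1_E P(s,t,Z_s,B)] for every E in F_s,
    i.e. P(Z_t in B | F_s) = P(s,t,Z_s,B) a.s. *)
Definition markov_with_transition (R : realType) (d : measure_display)
    (T : measurableType d) (Pr : probability T R) (Z : R -> T -> R)
    (P : R -> R -> R.-pker R ~> R) : Prop :=
  forall s t, 0 <= s -> s <= t ->
  forall (E : set T), natural_filtration Z s E ->
  forall (B : set R), measurable B ->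
    Pr (E `&` Z t @^-1` B) = (\int[Pr]_(w in E) P s t (Z s w) B)%E.

(** kappa-self-similarity: (Z_{ct})_t and (c^kappa Z_t)_t have the same
    finite-dimensional distributions, for every c > 0. *)
Definition self_similar (R : realType) (d : measure_display)
    (T : measurableType d) (Pr : probability T R) (Z : R -> T -> R)
    (kappa : R) : Prop :=
  forall c : R, 0 < c ->
  forall (n : nat) (ts : 'I_n -> R) (Bs : 'I_n -> set R),
    (forall i, 0 <= ts i) -> (forall i, measurable (Bs i)) ->
    Pr (\bigcap_(i in [set: 'I_n]) (Z (c * ts i) @^-1` Bs i)) =
    Pr (\bigcap_(i in [set: 'I_n]) ((fun w => c `^ kappa * Z (ts i) w) @^-1` Bs i)).

(** Scaling property of the transition function:
    P(cs, ct, c^kappa x, c^kappa dy) = P(s, t, x, dy), where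
    M(c dy) is the measure B |-> M(c B). *)
Definition scaling_property (R : realType) (P : R -> R -> R.-pker R ~> R)
    (kappa : R) : Prop :=
  forall (c s t x : R) (B : set R), 0 < c -> 0 <= s -> s <= t -> measurable B ->
    P (c * s) (c * t) (c `^ kappa * x) ((fun y => c `^ kappa * y) @` B)
    = P s t x B.

(* Self-similarity is only used through the scaling property of [P]: integrating
   [f (c^kappa y)] against [P(s, t, x, dy)] is integrating [f] against
   [P(cs, ct, c^kappa x, dz)].  Combined with Chapman-Kolmogorov this gives
   [\int P(r, s, x, dy) P(cs, t, c^kappa y, B) = P(cr, t, c^kappa x, B)]
   for [c >= 0] (the case [c = 0] since [0^kappa = 0]), and both identities are
   instances of it, with [c = at/s] and [c = bu/t] respectively. *)

From HB Require Import structures.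
From mathcomp Require Import all_boot all_order all_algebra.
From mathcomp Require Import all_classical all_reals all_analysis.
From mathcomp Require Import measurable_realfun ring.

Import Order.TTheory GRing.Theory Num.Theory.
Import numFieldNormedType.Exports.

Local Open Scope classical_set_scope.
Local Open Scope ring_scope.

Lemma integral_pker_cst (R : realType) (Q : R.-pker R ~> R) (x : R) (r : \bar R) :
  (\int[Q x]_y cst r y = r)%E.
Proof. by rewrite integral_cst // prob_kernel mule1. Qed.

Section scaled_transition.
Variables (R : realType) (P : R -> R -> R.-pker R ~> R) (kappa : R).
Hypothesis P_tf : transition_function P.
Hypothesis P_scal : scaling_property P kappa.

Lemma pker_scaling_preimage (c s t x : R) (A : set R) :
  0 < c -> 0 <= s -> s <= t -> measurable A ->
  P (c * s) (c * t) (c `^ kappa * x) A =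
  P s t x ((fun y => c `^ kappa * y) @^-1` A).
Proof.
move=> c_gt0 s_ge0 st mA.
have k_neq0 : c `^ kappa != 0 by rewrite gt_eqF ?powR_gt0.
have mpre : measurable ((fun y => c `^ kappa * y) @^-1` A).
  by rewrite -[X in measurable X]setTI; apply: measurable_funM.
rewrite -(P_scal _ _ _ _ _ c_gt0 s_ge0 st mpre); congr (P _ _ _ _).
apply/seteqP; split => [z Az|z [y /= Ay <-]] //.
by exists ((c `^ kappa)^-1 * z); rewrite /= mulrA divff ?mul1r.
Qed.

Lemma integral_pker_scaling (c s t x : R) (f : R -> \bar R) :
  0 < c -> 0 <= s -> s <= t -> measurable_fun [set: R] f ->
  (forall y, 0 <= f y)%E ->
  (\int[P s t x]_y f (c `^ kappa * y)%R =
   \int[P (c * s)%R (c * t)%R (c `^ kappa * x)%R]_z f z)%E.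
Proof.
move=> c_gt0 s_ge0 st mf f_ge0.
have mscale : measurable_fun [set: R] (fun y : R => c `^ kappa * y).
  exact: measurable_funM.
rewrite [RHS](eq_measure_integral (pushforward (P s t x) (fun y => c `^ kappa * y))).
  by rewrite (ge0_integral_pushforward mscale).
by move=> A mA _; rewrite pker_scaling_preimage.
Qed.

Lemma scaled_chapman_kolmogorov (c r s t x : R) (B : set R) :
  kappa != 0 -> 0 <= c -> 0 <= r -> r <= s -> c * s <= t -> measurable B ->
  (\int[P r s x]_y P (c * s)%R t (c `^ kappa * y)%R B =
   P (c * r)%R t (c `^ kappa * x)%R B)%E.
Proof.
move=> kappa_neq0 c_ge0 r_ge0 rs cs_le_t mB.
have [->|c_neq0] := eqVneq c 0.
  rewrite powR0 // !mul0r.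
  under eq_integral do rewrite mul0r.
  exact: integral_pker_cst.
have c_gt0 : 0 < c by rewrite lt_neqAle eq_sym c_neq0.
have s_ge0 : 0 <= s := le_trans r_ge0 rs.
rewrite (@integral_pker_scaling c r s x (fun y => P (c * s) t y B)) //.
- apply: P_tf.2 => //; [exact: mulr_ge0 | exact: ler_wpM2l].
- exact: measurable_kernel.
Qed.

End scaled_transition.

Theorem lemma2p1 (R : realType) (d : measure_display) (T : measurableType d)
  (Pr : probability T R) (Z : R -> T -> R) (P : R -> R -> R.-pker R ~> R)
  (kappa : R) (kappa_gt0 : 0 < kappa)
  (Z_meas : forall t, measurable_fun setT (Z t))
  (Z_cadlag : cadlag Z)
  (Z_markov : markov_with_transition Pr Z P)
  (Z_ss : self_similar Pr Z kappa)
  (P_tf : transition_function P)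
  (P_scal : scaling_property P kappa) :
  forall (s t u a b : R) (B : set R),
    0 < s -> s <= t -> t <= u -> 0 <= a <= 1 -> 0 <= b <= 1 -> measurable B ->
    (\int[P 0%R s 0%R]_x P (a * t)%R t ((a * t / s) `^ kappa * x)%R B
       = P 0%R t 0%R B)%E
    /\ (forall x : R,
        (\int[P (a * t)%R t ((a * t / s) `^ kappa * x)%R]_y
            P (b * u)%R u ((b * u / t) `^ kappa * y)%R B
         = P (a * b * u)%R u ((a * b * u / s) `^ kappa * x)%R B)%E).
Proof.
move=> s t u a b B s_gt0 st tu /andP[a_ge0 a_le1] /andP[b_ge0 b_le1] mB.
have t_gt0 : 0 < t := lt_le_trans s_gt0 st.
have kappa_neq0 : kappa != 0 by rewrite gt_eqF.
have ckP c r s' t' x' :=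
  @scaled_chapman_kolmogorov _ _ _ P_tf P_scal c r s' t' x' B kappa_neq0.
have u_gt0 : 0 < u := lt_le_trans t_gt0 tu.
have at_ge0 : 0 <= a * t by rewrite mulr_ge0 ?(ltW t_gt0).
have cs_ge0 : 0 <= a * t / s by rewrite divr_ge0 ?(ltW s_gt0).
have cu_ge0 : 0 <= b * u / t by rewrite divr_ge0 ?mulr_ge0 ?(ltW t_gt0) ?(ltW u_gt0).
split.
  have := ckP (a * t / s) 0 s t 0 cs_ge0 (lexx 0) (ltW s_gt0).
  rewrite divfK ?gt_eqF // !mulr0; apply => //.
  exact: ler_piMl (ltW t_gt0) a_le1.
move=> x; have := ckP (b * u / t) (a * t) t u ((a * t / s) `^ kappa * x) cu_ge0.
have -> : b * u / t * (a * t) = a * b * u by field; rewrite gt_eqF.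
rewrite divfK ?gt_eqF // mulrA -powRM //.
have -> : b * u / t * (a * t / s) = a * b * u / s by field; rewrite !gt_eqF.
by apply; rewrite ?ler_piMl ?(ltW t_gt0) ?(ltW u_gt0).
Qed.
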